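(* For all $n\ge1$, $|\mathbf{I}_n(000)|=\dfrac{(n+1)!-d_{n+1}}{n}$, where $d_m$ is the number of derangements (fixed-point-free permutations) of $[m]$.
   Context: An inversion sequence of length $n$ is an integer sequence $e=e_1\dots e_n$ with $0\le e_i<i$ for all $i$; $\mathbf{I}_n$ denotes the set of these. $\mathbf{I}_n(000)$ is the set of $e\in\mathbf{I}_n$ with no $i$ such that $e_i=e_{i+1}=e_{i+2}$ (i.e. avoiding the consecutive pattern $000$). *)

From mathcomp Require Import all_boot all_order all_algebra all_fingroup.
Set Implicit Arguments. Unset Strict Implicit. Unset Printing Implicit Defensive.

(* An inversion sequence of length n, e = e_1 ... e_n with 0 <= e_i < i,
   is represented as an n-tuple over 'I_n, where the entry at 0-based
   position j (i.e. e_{j+1}) satisfies e_{j+1} <= j. *)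
Definition is_inv_seq n (e : n.-tuple 'I_n) : bool :=
  [forall j : 'I_n, (val (tnth e j) <= val j)%N].

Definition avoids000 n (e : n.-tuple 'I_n) : bool :=
  ~~ [exists j : 'I_n, [&& (j.+2 < n)%N,
        nth 0%N (map val e) j == nth 0%N (map val e) j.+1 &
        nth 0%N (map val e) j.+1 == nth 0%N (map val e) j.+2]].

Definition I000 n : {set n.-tuple 'I_n} :=
  [set e | is_inv_seq e && avoids000 e].

Definition derangements m : nat := #|[set s : 'S_m | [forall i, s i != i]]|.

From mathcomp Require Import all_boot all_order all_algebra all_fingroup.
From mathcomp Require Import ring.
Set Implicit Arguments. Unset Strict Implicit. Unset Printing Implicit Defensive.
Import GRing.Theory Num.Theory.

(* Write a_n = |I_n(000)| and D_m for the number of derangements of [m].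
   The theorem is equivalent to the identity, for n >= 1,
       n * a_n + D_{n+1} = (n+1)!,
   which follows by a two-step induction from two recurrences:
   - a_{n+2} = (n+1) a_{n+1} + n a_n.  An inversion sequence of length n+1 is
     one of length n followed by a last entry x in [0, n]; if the sequence
     avoids 000, one value of x is forbidden when its last two entries are
     equal and none otherwise.  Writing c_n for the number of 000-avoiding
     sequences whose last two entries differ, this gives a_{n+1} = n a_n + c_n
     and c_{n+1} = n a_n.
   - D_{m+2} = (m+1) (D_{m+1} + D_m), a consequence of the alternating formula
     D_m = sum_k (-1)^k C(m,k) (m-k)!, itself obtained by inclusion-exclusion
     over the fixed points of a permutation. *)

Fixpoint invseqs n : seq (seq nat) :=
  if n is m.+1 then [seq rcons s x | s <- invseqs m, x <- iota 0 m.+1]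
  else [:: [::]].

Lemma invseqsS n :
  invseqs n.+1 = [seq rcons s x | s <- invseqs n, x <- iota 0 n.+1].
Proof. by []. Qed.

Lemma mem_invseqs n s :
  s \in invseqs n <-> size s = n /\ (forall j, j < n -> nth 0 s j <= j).
Proof.
elim: n s => [|n IH] s.
  by rewrite inE; split=> [/eqP -> | [/size0nil ->]].
rewrite invseqsS; split.
  case/allpairsP=> [[t x] [/IH [st ht] xn ->]]; rewrite size_rcons st.
  split=> // j jn; rewrite nth_rcons st; case: ltngtP => // [/ht // | ->].
  by rewrite -ltnS; move: xn; rewrite mem_iota.
case/lastP: s => [[]//|t x]; rewrite size_rcons => -[[st] ht].
apply/allpairsP; exists (t, x); split=> //.
  apply/IH; split=> // j jn.
  by have := ht j (ltnW jn); rewrite nth_rcons st jn.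
have := ht n (leqnn _); rewrite nth_rcons st ltnn eqxx => xn.
by rewrite mem_iota add0n ltnS.
Qed.

Lemma uniq_invseqs n : uniq (invseqs n).
Proof.
elim: n => // n IH; rewrite invseqsS; apply: allpairs_uniq => //; first exact: iota_uniq.
by move=> [s x] [t y] _ _ /= /rcons_inj.
Qed.

(* The last entry of an inversion sequence of length n is at most n - 1, hence
   a legal value for the entry following it; [last 0] covers the empty case. *)
Lemma last_invseqs n s : s \in invseqs n -> last 0 s <= n.
Proof.
case/lastP: s => // t y /mem_invseqs [st ht]; rewrite last_rcons.
move: st ht; rewrite size_rcons => <- /(_ (size t)).
by rewrite nth_rcons ltnn eqxx => /(_ (ltnSn _)) /leqW.
Qed.

Definition triple_at (s : seq nat) j :=
  [&& j.+2 < size s, nth 0 s j == nth 0 s j.+1 & nth 0 s j.+1 == nth 0 s j.+2].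

Fixpoint no_triple (r : seq nat) : bool :=
  if r is x :: ((y :: z :: _) as t) then ~~ ((x == y) && (y == z)) && no_triple t
  else true.

(* Sequences are grown at their end, so both predicates below look at the
   reversed sequence: [avoids s] says that s avoids 000 and [ends_twice s]
   that the last two entries of s are equal. *)
Definition avoids (s : seq nat) := no_triple (rev s).

Definition ends_twice (s : seq nat) :=
  if rev s is y :: z :: _ then y == z else false.

Lemma avoids_rcons s x :
  avoids (rcons s x) = avoids s && ~~ (ends_twice s && (x == last 0 s)).
Proof.
rewrite /avoids /ends_twice rev_rcons -[s in last 0 s]revK.
case: (rev s) => [|y [|z r]]; rewrite ?andbF ?andbT //.
rewrite [no_triple (x :: _)]/= rev_cons last_rcons andbC.
by rewrite [x == y]eq_sym [(y == x) && _]andbC.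
Qed.

Lemma ends_twice_rcons s x :
  0 < size s -> ends_twice (rcons s x) = (x == last 0 s).
Proof.
rewrite /ends_twice rev_rcons -[s in last 0 s]revK -size_rev.
by case: (rev s) => [|y r] //= _; rewrite rev_cons last_rcons.
Qed.

Lemma triple_at_rcons s x j : triple_at (rcons s x) j =
  triple_at s j || [&& j.+2 == size s, nth 0 s j == nth 0 s j.+1 & nth 0 s j.+1 == x].
Proof.
rewrite /triple_at size_rcons !nth_rcons.
case: (ltngtP j.+2 (size s)) => js.
- have j_s : j < size s by apply: ltn_trans (ltnW js).
  by rewrite j_s ltnS (ltnW js) orbF.
- by rewrite ltnS leqNgt js.
- by rewrite -js ltnSn ltnW.
Qed.

Lemma avoidsP s : avoids s <-> forall j, ~~ triple_at s j.
Proof.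
elim/last_ind: s => [|t x IH]; first by split=> // _ j; rewrite /triple_at andbF.
case/lastP: t IH => [|t1 y] IH.
  by split=> // _ [|j]; rewrite /triple_at.
case/lastP: t1 IH => [|u z] IH.
  by split=> // _ [|[|j]]; rewrite /triple_at.
set t := rcons (rcons u z) y.
have st : size t = (size u).+2 by rewrite !size_rcons.
have nth_z : nth 0 t (size u) = z by rewrite !nth_rcons !size_rcons ltnSn ltnn eqxx.
have nth_y : nth 0 t (size u).+1 = y by rewrite !nth_rcons !size_rcons ltnn eqxx.
have et : ends_twice t = (y == z) by rewrite /ends_twice !rev_rcons.
rewrite avoids_rcons et last_rcons; split.
  case/andP=> /IH noT yzx j; rewrite triple_at_rcons negb_or noT st /=.
  apply: contra yzx => /and3P [/eqP [->]]; rewrite nth_z nth_y => /eqP -> /eqP ->.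
  by rewrite !eqxx.
move=> noT; apply/andP; split.
  by apply/IH => j; have := noT j; rewrite triple_at_rcons negb_or => /andP [].
have := noT (size u); rewrite triple_at_rcons st eqxx nth_z nth_y negb_or /=.
by case/andP=> _; rewrite [z == y]eq_sym [y == x]eq_sym andbC.
Qed.

Lemma nth_val_tuple n (e : n.-tuple 'I_n) (j : 'I_n) :
  nth 0 (map val e) j = val (tnth e j).
Proof. by rewrite (nth_map (tnth e j)) ?size_tuple // -tnth_nth. Qed.

Lemma is_inv_seqE n (e : n.-tuple 'I_n) : is_inv_seq e = (map val e \in invseqs n).
Proof.
apply/forallP/idP => [ebound | /mem_invseqs [_ ebound] j].
  apply/mem_invseqs; rewrite size_map size_tuple; split=> // j jn.
  by have := ebound (Ordinal jn); rewrite -nth_val_tuple.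
by rewrite -nth_val_tuple ebound.
Qed.

Lemma avoids000E n (e : n.-tuple 'I_n) : avoids000 e = avoids (map val e).
Proof.
have triple_ord j : triple_at (map val e) j ->
    exists k : 'I_n, triple_at (map val e) k.
  move=> tj; have /andP [jn _] := tj; rewrite size_map size_tuple in jn.
  by exists (Ordinal (ltn_trans (ltnSn j) (ltnW jn))).
apply/idP/idP => [/existsPn noT | /avoidsP noT]; last first.
  by apply/existsPn => j; have := noT j; rewrite /triple_at size_map size_tuple.
apply/avoidsP => j; apply/negP => /triple_ord [k].
by have := noT k; rewrite /triple_at size_map size_tuple => /negP.
Qed.

Lemma invseqs_tuple n s :
  s \in invseqs n -> exists e : n.-tuple 'I_n, map val e = s.
Proof.
case/mem_invseqs=> ssz sbound.
have s_lt (j : 'I_n) : nth 0 s j < n := leq_ltn_trans (sbound j (ltn_ord j)) (ltn_ord j).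
exists [tuple Ordinal (s_lt j) | j < n]; rewrite -[RHS](mkseq_nth 0) ssz.
by rewrite /= -map_comp /mkseq -val_enum_ord -map_comp.
Qed.

Lemma card_I000 n : #|I000 n| = count avoids (invseqs n).
Proof.
rewrite cardE -size_filter -(size_map (fun e : n.-tuple 'I_n => map val e)).
apply/perm_size/uniq_perm.
- by rewrite map_inj_uniq ?enum_uniq // => e f /(inj_map val_inj) /val_inj.
- by rewrite filter_uniq // uniq_invseqs.
move=> s; rewrite mem_filter; apply/mapP/andP.
  case=> e; rewrite mem_enum inE => /andP [inv av] ->.
  by rewrite -avoids000E -is_inv_seqE.
case=> av sinv; have [e es] := invseqs_tuple sinv; exists e => //.
by rewrite mem_enum inE is_inv_seqE avoids000E es sinv av.
Qed.

Definition num_avoiding n := count avoids (invseqs n).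
Definition num_avoiding_split n :=
  count (fun s => avoids s && ~~ ends_twice s) (invseqs n).

Lemma sum_indicator (T : Type) (P : pred T) (r : seq T) :
  \sum_(x <- r) (P x : nat) = count P r.
Proof. by rewrite -sumn_count sumnE big_map. Qed.

Lemma count_invseqsS (P : pred (seq nat)) n : count P (invseqs n.+1) =
  \sum_(s <- invseqs n) count (fun x => P (rcons s x)) (iota 0 n.+1).
Proof.
rewrite invseqsS /allpairs count_flatten sumnE !big_map.
by apply: eq_bigr => s _; rewrite count_map.
Qed.

Lemma count_last_entries (b c : bool) y n : y <= n ->
  count (fun x => b && ~~ (c && (x == y))) (iota 0 n.+1) = n * b + (b && ~~ c).
Proof.
move=> yn; case: b; last by rewrite (eq_count (a2 := pred0)) ?count_pred0 ?muln0.
case: c; last by rewrite (eq_count (a2 := predT)) ?count_predT ?size_iota ?addn1 ?muln1.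
have := count_predC (pred1 y) (iota 0 n.+1).
rewrite size_iota count_uniq_mem ?iota_uniq // mem_iota add0n ltnS yn muln1 addn0.
by rewrite add1n => -[].
Qed.

Lemma num_avoidingS n : num_avoiding n.+1 = n * num_avoiding n + num_avoiding_split n.
Proof.
rewrite /num_avoiding /num_avoiding_split count_invseqsS.
rewrite -!sum_indicator big_distrr -big_split; apply: eq_big_seq => s sn.
under eq_count do rewrite avoids_rcons.
by rewrite count_last_entries // (last_invseqs sn).
Qed.

(* Appending an entry different from the last one keeps the last two entries
   distinct; this needs a nonempty sequence, i.e. n > 0. *)
Lemma num_avoiding_splitS n :
  0 < n -> num_avoiding_split n.+1 = n * num_avoiding n.
Proof.
move=> n_gt0; rewrite /num_avoiding /num_avoiding_split count_invseqsS.
rewrite -sum_indicator big_distrr; apply: eq_big_seq => s sn.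
have /mem_invseqs [sz _] := sn.
under eq_count do rewrite avoids_rcons ends_twice_rcons ?sz //.
transitivity (count (fun x => avoids s && ~~ (true && (x == last 0 s))) (iota 0 n.+1)).
  by apply: eq_count => x; case: (avoids s) (ends_twice s) (x == last 0 s) => [] [] [].
by rewrite count_last_entries ?(last_invseqs sn) // andbF addn0.
Qed.

Lemma num_avoidingSS n : 0 < n ->
  num_avoiding n.+2 = n.+1 * num_avoiding n.+1 + n * num_avoiding n.
Proof. by move=> n_gt0; rewrite num_avoidingS num_avoiding_splitS. Qed.

Section Derangements.

Local Open Scope ring_scope.

(* The alternating sum over the subsets of B vanishes unless B is empty:
   toggling a fixed element b of B pairs subsets of opposite parity. *)
Lemma sum_sign_subsets (R : pzRingType) (T : finType) (B : {set T}) :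
  \sum_(A : {set T} | A \subset B) (-1) ^+ #|A| = (B == set0)%:R :> R.
Proof.
have [->|[b bB]] := set_0Vmem B.
  by rewrite eqxx (big_pred1 set0) ?cards0 // => A; rewrite subset0.
have -> : (B == set0) = false by apply/eqP => B0; rewrite B0 inE in bB.
pose toggle (A : {set T}) := if b \in A then A :\ b else b |: A.
have toggleK : involutive toggle.
  move=> A; rewrite /toggle; case: (boolP (b \in A)) => bA.
    by rewrite setD11 setD1K.
  by rewrite setU11 setU1K.
have toggle_sub (A : {set T}) : (toggle A \subset B) = (A \subset B).
  rewrite /toggle; case: ifP => bA; last by rewrite subUset sub1set bB.
  apply/idP/idP => [AB | /(subset_trans (subD1set _ _)) //].
  by rewrite -(setD1K bA) subUset sub1set bB.
have toggle_sign (A : {set T}) : (-1) ^+ #|toggle A| = - (-1) ^+ #|A| :> R.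
  rewrite /toggle; case: ifP => bA.
    by rewrite [in RHS](cardsD1 b A) bA exprS mulN1r opprK.
  by rewrite cardsU1 bA exprS mulN1r.
rewrite (bigID (fun A : {set T} => b \in A)) /= (reindex_inj (inv_inj toggleK)) /=.
rewrite (eq_big (fun A : {set T} => (A \subset B) && (b \notin A))
                (fun A : {set T} => - (-1) ^+ #|A|)).
- by rewrite sumrN addNr.
- by move=> A; rewrite toggle_sub /toggle; case: ifP; rewrite !inE ?eqxx.
- by move=> A _; rewrite toggle_sign.
Qed.

(* The permutations fixing every point of A are those of the complement. *)
Lemma card_perm_fixing (T : finType) (A : {set T}) :
  #|[set s : {perm T} | A \subset [set i | s i == i]]| = (#|T| - #|A|)`!%N.
Proof.
rewrite -(cardsC A) addKn -card_perm; apply: eq_card => s.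
rewrite !inE; apply/subsetP/subsetP => [fixA i | onA i iA]; rewrite !inE.
  by apply: contraNN => iA; have := fixA i iA; rewrite inE.
by apply/negPn/negP => /onA; rewrite inE iA.
Qed.

(* Inclusion-exclusion over the set of fixed points of a permutation. *)
Lemma derangements_incl_excl (R : pzRingType) m : (derangements m)%:R =
  \sum_(A : {set 'I_m}) (-1) ^+ #|A| * ((m - #|A|)`!)%:R :> R.
Proof.
rewrite /derangements -sum1_card natr_sum big_mkcond /=.
pose fixed (s : 'S_m) := [set i | s i == i].
transitivity (\sum_(s : 'S_m) \sum_(A : {set 'I_m} | A \subset fixed s) (-1) ^+ #|A| : R).
  apply: eq_bigr => s _; rewrite sum_sign_subsets inE.
  suff -> : [forall i, s i != i] = (fixed s == set0) by case: (fixed s == set0).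
  apply/forallP/eqP => [noFix | fix0 i].
    by apply/setP => i; rewrite !inE (negbTE (noFix i)).
  by apply/negP => si; have := in_set0 i; rewrite -fix0 /fixed inE si.
rewrite (eq_bigr _ (fun s _ => big_mkcond _ _)) exchange_big /=.
apply: eq_bigr => A _; rewrite -big_mkcond /= sumr_const [RHS]mulr_natr.
by congr (_ *+ _); rewrite -[X in (X - _)%N](card_ord m) -(card_perm_fixing A);
  apply: eq_card => s; rewrite inE.
Qed.

Lemma derangements_alt (R : pzRingType) m : (derangements m)%:R =
  \sum_(k < m.+1) (-1) ^+ k * ('C(m, k) * (m - k)`!)%:R :> R.
Proof.
have card_lt (A : {set 'I_m}) : (#|A| < m.+1)%N.
  by rewrite ltnS -[X in (_ <= X)%N](card_ord m) max_card.
rewrite derangements_incl_excl.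
rewrite (partition_big (fun A : {set 'I_m} => Ordinal (card_lt A)) predT) //=.
apply: eq_bigr => k _; rewrite (eq_bigr (fun _ => (-1) ^+ k * ((m - k)`!)%:R)).
  rewrite sumr_const -mulrnAr -mulrnA mulnC; congr (_ * (_ * _)%:R).
  rewrite -[X in 'C(X, _)](card_ord m) -card_draws.
  by apply: eq_card => A; rewrite !inE unfold_in.
by move=> A /eqP <-.
Qed.

(* Both sides equal (m+1)! / k!. *)
Lemma binomial_factS m k : (k <= m)%N ->
  ('C(m.+1, k) * (m.+1 - k)`! = m.+1 * ('C(m, k) * (m - k)`!))%N.
Proof.
move=> km; apply/eqP; rewrite -(eqn_pmul2r (fact_gt0 k)).
rewrite -mulnA [((m.+1 - k)`! * _)%N]mulnC bin_fact; last exact: leqW.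
by rewrite -!mulnA [((m - k)`! * _)%N]mulnC bin_fact // factS.
Qed.

Lemma derangementsS (R : comPzRingType) m :
  (derangements m.+1)%:R = m.+1%:R * (derangements m)%:R + (-1) ^+ m.+1 :> R.
Proof.
rewrite !derangements_alt big_ord_recr /= binn subnn fact0 muln1 mulr1 mulr_sumr.
congr (_ + _); apply: eq_bigr => k _.
by rewrite binomial_factS -1?ltnS // natrM mulrCA.
Qed.

Lemma derangementsSS m :
  (derangements m.+2 = m.+1 * (derangements m.+1 + derangements m))%N.
Proof.
apply/eqP; rewrite -(eqr_nat int) natrM natrD !derangementsS !exprS.
by rewrite -!natr1; apply/eqP; ring.
Qed.

Lemma derangements0 : derangements 0 = 1%N.
Proof.
by apply/eqP; rewrite -(eqr_nat int) derangements_alt big_ord1.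
Qed.

Lemma derangements1 : derangements 1 = 0%N.
Proof.
by apply/eqP; rewrite -(eqr_nat int) derangementsS derangements0 expr1 mulr1 addrN.
Qed.

End Derangements.

Lemma num_avoiding_derangements n :
  0 < n -> n * num_avoiding n + derangements n.+1 = n.+1`!.
Proof.
suff both k : 0 < k -> k * num_avoiding k + derangements k.+1 = k.+1`! /\
    k.+1 * num_avoiding k.+1 + derangements k.+2 = k.+2`!.
  by move/both=> [].
elim: k => [// | [_ _ | k IH _]].
  by rewrite !derangementsSS derangements1 derangements0; split.
have [id_k id_k1] := IH isT; split=> //.
rewrite num_avoidingSS // derangementsSS -mulnDr addnACA id_k1 id_k.
by rewrite [(k.+4)`!]factS [(k.+3)`!]factS; ring.
Qed.

Local Open Scope ring_scope.

Theorem mainTheorem9 (n : nat) (hn : (1 <= n)%N) :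
  (#|I000 n|%:R : rat) = (((n.+1)`!)%:R - (derangements n.+1)%:R) / n%:R.
Proof.
rewrite card_I000 -/(num_avoiding n) -(num_avoiding_derangements hn) natrD addrK natrM.
by rewrite mulrAC divff ?mul1r // pnatr_eq0 -lt0n.
Qed.
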